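(* Let $M$ be a finitely presented $n$-parameter persistence module with minimal free resolution $(F_\bullet,p_\bullet)$ and fixed decomposition isomorphisms as described in the context. If $\vec r\in\xi_1(M)$ (a generator of $F_1$), then $\vec r^{\mathcal L_{\vec r}}\notin\ker p_1^{\mathcal L_{\vec r}}$, and so $\vec r$ kills a bar in $M^{\mathcal L_{\vec r}}\cong_\phi\bigoplus_{j}\mathds 1^{I_j}$.
   Context: Modules are $\mathbb{R}^n$-graded modules over $P_n$ (monoid ring over a field of $([0,\infty)^n,+)$); $\xi_1(M)$ denotes the generators (with their grades) of $F_1$ in a minimal free resolution. For $\vec a\in\mathbb{R}^n$, $\mathcal L_{\vec a}$ is the line $t\mapsto\vec a+t\vec1$. For a positively sloped line $\mathcal L$ with order-preserving $\|\cdot\|_\infty$-isometric parametrization $\iota$, $M^{\mathcal L}=M\circ\iota$, and $(F^{\mathcal L}_\bullet,p^{\mathcal L}_\bullet)$ is the induced free resolution of $M^{\mathcal L}$ (pullback along $\iota$): generator $\vec a$ of $F_i$ corresponds to $\vec a^{\mathcal L}$ of grade $\iota^{-1}(\mathrm{push}_{\mathcal L}(\mathrm{gr}\,\vec a))$, where $\mathrm{push}_{\mathcal L}(\vec p)=\min\{\vec q\in\mathcal L:\vec q\ge\vec p\}$. For each $\mathcal L$ fix an isomorphism $\phi:M^{\mathcal L}\to\bigoplus_{j}\mathds 1^{I_j}$, $I_j=[b_j,d_j)$ (possibly empty), with as many summands as generators of $F_0$. The canonical resolution $F'_\bullet$ of $\bigoplus\mathds 1^{I_j}$ has $F'_0$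 free on $\{b_j\}$, $F'_1$ free on $\{d_j:d_j\ne\infty\}$, $d_j\mapsto x^{d_j-b_j}b_j$; $\phi$ lifts to a chain map $\phi_\bullet:F^{\mathcal L}_\bullet\to F'_\bullet$. A generator $\vec r$ of $F_1$ kills the bar $I_j$ if $\mathrm{gr}(\vec r^{\mathcal L})=d_j$ and the coefficient of $d_j$ in $\phi_1(\vec r^{\mathcal L})$ is nonzero (generating a bar is defined analogously with $\phi_0$). The isomorphisms are fixed so that each bar is generated by a unique generator of $F^{\mathcal L}_0$ and killed by a unique generator of $F^{\mathcal L}_1$, and every generator of $F^{\mathcal L}_0$ generates some bar. *)

From HB Require Import structures.
From mathcomp Require Import all_boot all_order all_algebra.
From mathcomp Require Import reals.
Set Implicit Arguments. Unset Strict Implicit. Unset Printing Implicit Defensive.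
Import Order.TTheory GRing.Theory Num.Theory.
Local Open Scope ring_scope.

Definition leg {R : realType} {n : nat} (p q : 'I_n -> R) : Prop :=
  forall i, p i <= q i.

Definition le1 {R : realType} (x y : R) : Prop := x <= y.

(* grades of generators of the canonical F'_1: d = None means d = infinity,
   which is not a generator of F'_1 *)
Definition leopt {R : realType} (od : option R) (t : R) : Prop :=
  match od with Some x => x <= t | None => False end.

(* A free module F with generators indexed by 'I_m of grades gr : 'I_m -> T.
   Its component F(a) at grade a has basis {x^(a - gr i) * e_i | gr i <= a},
   and is represented by column vectors v : 'cV[K]_m supported there. *)
Definition supported {K : fieldType} {T U : Type} (le : T -> U -> Prop)
  {m : nat} (gr : 'I_m -> T) (a : U) (v : 'cV[K]_m) : Prop :=
  forall i, v i 0 != 0 -> le (gr i) a.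

(* elements of (maximal ideal) * F at grade a: supported on generators of
   grade strictly below a *)
Definition in_max_ideal {K : fieldType} {T : Type} (le : T -> T -> Prop)
  {m : nat} (gr : 'I_m -> T) (a : T) (v : 'cV[K]_m) : Prop :=
  forall i, v i 0 != 0 -> le (gr i) a /\ gr i <> a.

(* A graded morphism from the free module with generator grades grS (k gens)
   to the one with generator grades grT (m gens): generator j is sent to
   sum_i A i j * x^(grS j - grT i) * e_i; this requires grT i <= grS j when
   A i j != 0.  Composition of such morphisms is the matrix product and at
   each grade the morphism acts on coefficient vectors by A *m _. *)
Definition graded_mx {K : fieldType} {T U : Type} (le : T -> U -> Prop)
  {m k : nat} (grT : 'I_m -> T) (grS : 'I_k -> U) (A : 'M[K]_(m, k)) : Prop :=
  forall i j, A i j != 0 -> le (grT i) (grS j).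

(* p_1 : F_1 -> F_0 (matrix P, F_0 generator grades g, F_1 generator grades h)
   is the first map of a MINIMAL free resolution of M = coker p_1:
   im p_1 <= m F_0  (p_0 minimal)  and  ker p_1 = im p_2 <= m F_1. *)
Definition minimal_presentation {K : fieldType} {R : realType} {n m k : nat}
  (g : 'I_m -> 'I_n -> R) (h : 'I_k -> 'I_n -> R) (P : 'M[K]_(m, k)) : Prop :=
  [/\ graded_mx leg g h P,
      (forall (a : 'I_n -> R) (v : 'cV[K]_k),
          supported leg h a v -> in_max_ideal leg g a (P *m v)) &
      (forall (a : 'I_n -> R) (v : 'cV[K]_k),
          supported leg h a v -> P *m v = 0 -> in_max_ideal leg h a v)].

Definition iota_line {R : realType} {n : nat} (a : 'I_n -> R) (t : R)
  : 'I_n -> R := fun i => a i + t.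

(* t = iota^{-1}(push_L(p)),  push_L(p) = min {q in L : q >= p} *)
Definition push_param {R : realType} {n : nat} (a p : 'I_n -> R) (t : R)
  : Prop :=
  leg p (iota_line a t) /\
  (forall t', leg p (iota_line a t') -> t <= t').

(* bars I_j = [b j, d j) (d j = None means infinity), j : 'I_m *)
Definition bars_wf {R : realType} {m : nat} (b : 'I_m -> R)
  (d : 'I_m -> option R) : Prop :=
  forall j x, d j = Some x -> b j <= x.

(* p'_1 : F'_1 -> F'_0, d_j |-> x^(d_j - b_j) b_j.  F'_1 is encoded with the
   index set 'I_m, generators with d j = None being absent (vectors in F'_1
   are supported on finite d, enforced by [supported leopt d]). *)
Definition canon_p1 {K : fieldType} {R : realType} {m : nat}
  (d : 'I_m -> option R) : 'M[K]_m :=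
  \matrix_(i, j) (if (i == j) && (d j != None) then 1 else 0).

(* (Phi0, Phi1) : (F^L_0 <- F^L_1) -> (F'_0 <- F'_1) is a chain map lifting
   an ISOMORPHISM phi : M^L = coker P -> coker p'_1 = (+)_j 1^{I_j}.
   s = grades of F^L_0 generators, tL = grades of F^L_1 generators. *)
Definition lifts_iso {K : fieldType} {R : realType} {m k : nat}
  (s : 'I_m -> R) (tL : 'I_k -> R) (P : 'M[K]_(m, k))
  (b : 'I_m -> R) (d : 'I_m -> option R)
  (Phi0 : 'M[K]_m) (Phi1 : 'M[K]_(m, k)) : Prop :=
  [/\ graded_mx le1 b s Phi0,
      graded_mx leopt d tL Phi1,
      canon_p1 d *m Phi1 = Phi0 *m P,
      (* induced map injective at every grade t *)
      (forall (t : R) (v : 'cV[K]_m), supported le1 s t v ->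
         (exists w : 'cV[K]_m, supported leopt d t w /\
                               Phi0 *m v = canon_p1 d *m w) ->
         exists u : 'cV[K]_k, supported le1 tL t u /\ v = P *m u) &
      (* induced map surjective at every grade t *)
      (forall (t : R) (w : 'cV[K]_m), supported le1 b t w ->
         exists v : 'cV[K]_m, supported le1 s t v /\
         exists w' : 'cV[K]_m, supported leopt d t w' /\
                     w = Phi0 *m v + canon_p1 d *m w')].

Definition generates_bar {K : fieldType} {R : realType} {m : nat}
  (s : 'I_m -> R) (b : 'I_m -> R) (Phi0 : 'M[K]_m) (i j : 'I_m) : Prop :=
  b j = s i /\ Phi0 j i != 0.

Definition kills_bar {K : fieldType} {R : realType} {m k : nat}
  (tL : 'I_k -> R) (d : 'I_m -> option R) (Phi1 : 'M[K]_(m, k))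
  (r : 'I_k) (j : 'I_m) : Prop :=
  d j = Some (tL r) /\ Phi1 j r != 0.

Definition fixed_normalization {K : fieldType} {R : realType} {m k : nat}
  (s : 'I_m -> R) (tL : 'I_k -> R) (b : 'I_m -> R) (d : 'I_m -> option R)
  (Phi0 : 'M[K]_m) (Phi1 : 'M[K]_(m, k)) : Prop :=
  [/\ (forall j, exists! i, generates_bar s b Phi0 i j),
      (forall j x, d j = Some x -> exists! r, kills_bar tL d Phi1 r j) &
      (forall i, exists j, generates_bar s b Phi0 i j)].

From HB Require Import structures.
From mathcomp Require Import all_boot all_order all_algebra.
From mathcomp Require Import reals.
Set Implicit Arguments. Unset Strict Implicit. Unset Printing Implicit Defensive.
Import Order.TTheory GRing.Theory Num.Theory.
Local Open Scope ring_scope.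

(* Let e be the basis vector of r and tau = tL r, the grade of
   r^L, so that tau <= 0.  Minimality of the resolution gives P e <> 0, since
   a kernel element supported at grade h r cannot have a unit coefficient at r.
   If r killed no bar, Phi1 e would live in F'_1 at some grade t' < tau; as
   every generator of F^L_0 generates a unique bar, Phi0 reflects grades, so
   P e lives in F^L_0 at grade t' as well and, phi being injective, P e = P u
   with u in F^L_1 at grade t'.  Such u only involves generators j with
   tL j < tau <= 0, i.e. h j <= h r, and u r = 0; hence e - u is a kernel
   element at grade h r with coefficient 1 at r, contradicting minimality. *)

Lemma delta_col_mulE (K : fieldType) (m k : nat) (A : 'M[K]_(m, k)) r i :
  (A *m delta_mx r (0 : 'I_1)) i 0 = A i r.
Proof. by rewrite -colE mxE. Qed.

Lemma finite_lt_bound (R : realDomainType) (I : finType) (S : pred I)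
    (f : I -> R) (tau : R) :
  (forall j, S j -> f j < tau) -> exists2 t, t < tau & forall j, S j -> f j <= t.
Proof.
have lt_tau1 : tau - 1 < tau by rewrite ltrBlDr ltrDl ltr01.
move=> f_lt; exists (\big[Order.max/(tau - 1)]_(j | S j) f j).
  exact: bigmax_lt.
by move=> j Sj; apply: le_bigmax_cond.
Qed.

Section PushOntoLine.

Variables (R : realType) (n : nat) (a p : 'I_n -> R) (t : R).
Hypothesis push_t : push_param a p t.

Lemma push_param_le0 : leg p a -> t <= 0.
Proof.
by case: push_t => _ t_min p_le_a; apply: t_min => i; rewrite /iota_line addr0.
Qed.

Lemma push_param_leg : t <= 0 -> leg p a.
Proof.
case: push_t => p_le _ t_le0 i.
by apply: le_trans (p_le i) _; rewrite /iota_line gerDl.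
Qed.

End PushOntoLine.

Section MinimalPresentation.

Variables (K : fieldType) (R : realType) (n m k : nat).
Variables (h : 'I_k -> 'I_n -> R) (P : 'M[K]_(m, k)).
Hypothesis ker_max_ideal : forall (a : 'I_n -> R) (v : 'cV[K]_k),
  supported leg h a v -> P *m v = 0 -> in_max_ideal leg h a v.

Lemma kernel_coef_at_own_grade (v : 'cV[K]_k) r :
  supported leg h (h r) v -> P *m v = 0 -> v r 0 = 0.
Proof.
move=> v_supp Pv0; apply/eqP; apply: contraT => vr_neq0.
by have [_] := ker_max_ideal v_supp Pv0 vr_neq0.
Qed.

Lemma mul_delta_neq0 r : P *m delta_mx r (0 : 'I_1) != 0.
Proof.
apply/eqP => Pe0.
suff : delta_mx r (0 : 'I_1) r 0 = 0 :> K.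
  by rewrite mxE !eqxx => /eqP; rewrite oner_eq0.
apply: kernel_coef_at_own_grade Pe0 => i.
rewrite mxE eqxx andbT; case: (eqVneq i r) => [-> _ l // | _]; by rewrite eqxx.
Qed.

Variables (r : 'I_k) (tL : 'I_k -> R).
Hypothesis push_tL : forall j, push_param (h r) (h j) (tL j).

Lemma mul_delta_notin_image_below (t : R) (u : 'cV[K]_k) :
  t < tL r -> supported le1 tL t u -> P *m u != P *m delta_mx r (0 : 'I_1).
Proof.
move=> t_lt u_supp; apply/eqP => Pu_e.
have tLr_le0 : tL r <= 0 by apply: (push_param_le0 (push_tL r)).
have ur0 : u r 0 = 0.
  by apply/eqP; apply: contraT => /u_supp; rewrite /le1 leNgt t_lt.
suff : (delta_mx r 0 - u) r 0 = 0.
  by rewrite !mxE !eqxx ur0 subr0 => /eqP; rewrite oner_eq0.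
apply: kernel_coef_at_own_grade; last by rewrite mulmxBr Pu_e subrr.
move=> i; case: (eqVneq i r) => [-> _ l // | i_neq_r].
rewrite !mxE (negbTE i_neq_r) add0r oppr_eq0 => /u_supp tLi_le.
apply: (push_param_leg (push_tL i)).
by apply: le_trans tLr_le0; apply/ltW/(le_lt_trans tLi_le).
Qed.

End MinimalPresentation.

Section BarDecomposition.

Variables (K : fieldType) (R : realType) (m : nat).
Variables (s b : 'I_m -> R) (d : 'I_m -> option R) (Phi0 : 'M[K]_m).

Lemma canon_p1_mulE (w : 'cV[K]_m) j :
  (canon_p1 d *m w) j 0 = if d j is Some _ then w j 0 else 0.
Proof.
rewrite mxE (bigD1 j) //= big1 => [|i i_neq_j]; last first.
  by rewrite mxE eq_sym (negbTE i_neq_j) mul0r.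
by rewrite mxE eqxx addr0; case: (d j) => [y|] /=; rewrite ?mul1r ?mul0r.
Qed.

Lemma canon_p1_image_grade (t : R) (w : 'cV[K]_m) j :
  bars_wf b d -> supported leopt d t w ->
  (canon_p1 d *m w) j 0 != 0 -> b j <= t.
Proof.
move=> bd_wf w_supp; rewrite canon_p1_mulE.
case dj: (d j) => [y|] /=; last by rewrite eqxx.
by move=> /w_supp; rewrite /leopt dj; apply: le_trans (bd_wf _ _ dj).
Qed.

(* The generator of x of largest grade generates a bar j which no other
   generator of that grade meets, so it survives in coordinate j of Phi0 x. *)
Lemma supported_of_bar_image (t : R) (x : 'cV[K]_m) :
  graded_mx le1 b s Phi0 ->
  (forall j, exists! i, generates_bar s b Phi0 i j) ->
  (forall i, exists j, generates_bar s b Phi0 i j) ->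
  (forall j, (Phi0 *m x) j 0 != 0 -> b j <= t) -> supported le1 s t x.
Proof.
move=> Phi0_graded gen_uniq gen_ex image_le i0 xi0.
have [top x_top top_max] := @arg_maxP _ _ _ i0 (fun i => x i 0 != 0) s xi0.
apply: le_trans (top_max _ xi0) _.
have [j [bj Phi0_jtop]] := gen_ex top.
have [i1 [_ gen_unique]] := gen_uniq j.
rewrite -bj; apply: image_le.
rewrite mxE (bigD1 top) //= big1 ?addr0 ?mulf_neq0 // => i i_neq_top.
apply/eqP; rewrite mulf_eq0; apply: contraR i_neq_top.
rewrite negb_or => /andP[Phi0_ji xi].
have s_i : s i = s top.
  by apply/le_anti/andP; split; [exact: top_max | rewrite -bj; exact: Phi0_graded].
by apply/eqP; rewrite -(gen_unique i) ?(gen_unique top) //; split; rewrite ?s_i.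
Qed.

End BarDecomposition.

Lemma kills_barP (K : fieldType) (R : realType) (m k : nat) (tL : 'I_k -> R)
    (d : 'I_m -> option R) (Phi1 : 'M[K]_(m, k)) r j :
  reflect (kills_bar tL d Phi1 r j) ((d j == Some (tL r)) && (Phi1 j r != 0)).
Proof. by apply: (iffP andP) => -[/eqP dj Phi1_jr]. Qed.

Lemma supported_below_of_no_kill (K : fieldType) (R : realType) (m k : nat)
    (tL : 'I_k -> R) (d : 'I_m -> option R) (Phi1 : 'M[K]_(m, k)) r :
  graded_mx leopt d tL Phi1 -> (forall j, ~ kills_bar tL d Phi1 r j) ->
  exists2 t, t < tL r & supported leopt d t (Phi1 *m delta_mx r (0 : 'I_1)).
Proof.
move=> Phi1_graded no_kill.
have [|t t_lt bound] :=
  @finite_lt_bound _ _ (fun j => Phi1 j r != 0) (fun j => odflt 0 (d j)) (tL r).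
  move=> j Phi1_jr; have := Phi1_graded _ _ Phi1_jr; rewrite /leopt.
  case dj: (d j) => [y|] //= y_le; rewrite lt_neqAle y_le andbT.
  by apply: contra_not_neq (no_kill j) => y_eq; split; rewrite ?dj ?y_eq.
exists t => // j; rewrite delta_col_mulE => Phi1_jr.
have := bound j Phi1_jr; have := Phi1_graded _ _ Phi1_jr.
by rewrite /leopt; case: (d j).
Qed.

Theorem mainTheorem16 (K : fieldType) (R : realType) (n m k : nat)
  (g : 'I_m -> 'I_n -> R) (h : 'I_k -> 'I_n -> R) (P : 'M[K]_(m, k))
  (Hmin : minimal_presentation g h P)
  (r : 'I_k)
  (s : 'I_m -> R) (tL : 'I_k -> R)
  (Hs : forall i, push_param (h r) (g i) (s i))
  (Ht : forall j, push_param (h r) (h j) (tL j))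
  (b : 'I_m -> R) (d : 'I_m -> option R) (Hbd : bars_wf b d)
  (Phi0 : 'M[K]_m) (Phi1 : 'M[K]_(m, k))
  (Hphi : lifts_iso s tL P b d Phi0 Phi1)
  (Hnorm : fixed_normalization s tL b d Phi0 Phi1) :
  P *m delta_mx r (0 : 'I_1) != 0 /\ exists j, kills_bar tL d Phi1 r j.
Proof.
case: Hmin => _ _ ker_max_ideal.
case: Hphi => Phi0_graded Phi1_graded chain phi_inj _.
case: Hnorm => gen_uniq _ gen_ex.
split; first exact: (mul_delta_neq0 ker_max_ideal).
case: (pickP (fun j => (d j == Some (tL r)) && (Phi1 j r != 0))).
  by move=> j /kills_barP; exists j.
move=> no_kill; exfalso.
have [t t_lt w_supp] : exists2 t, t < tL r &
    supported leopt d t (Phi1 *m delta_mx r (0 : 'I_1)).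
  by apply: supported_below_of_no_kill => // j /kills_barP; rewrite no_kill.
have chain_e : Phi0 *m (P *m delta_mx r (0 : 'I_1)) =
                canon_p1 d *m (Phi1 *m delta_mx r (0 : 'I_1)).
  by rewrite !mulmxA chain.
have x_supp : supported le1 s t (P *m delta_mx r (0 : 'I_1)).
  apply: supported_of_bar_image Phi0_graded gen_uniq gen_ex _ => j.
  by rewrite chain_e; apply: canon_p1_image_grade.
have [u [u_supp Pu]] :=
  phi_inj t _ x_supp (ex_intro _ _ (conj w_supp chain_e)).
have := mul_delta_notin_image_below ker_max_ideal Ht t_lt u_supp.
by rewrite Pu eqxx.
Qed.
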